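(* Let $\{q_n\}$ be the Fibonacci Quilt sequence and, for $n,k\ge0$, let $q_{n,k}$ denote the number of integers $m\in[0,q_{n+1})$ whose Greedy-6 decomposition has exactly $k$ summands (with $0$ having the empty decomposition). Then \[q_{n,k}=\begin{cases}1 & k=0,\ n\ge0,\ \text{or } k=2,\ n=5,\\ n & k=1,\ n\ge0,\\ 1+\frac{(n-5)(n-4)}{2} & k=2,\ n\ge6,\\ q_{n-5,k-1}+q_{n-1,k} & k\ge3,\ n\ge5(k-1),\\ 0 & k\ge3,\ n<5(k-1),\ \text{or } k=2,\ n\le4,\end{cases}\] and $H(x,y)=\sum_{n\ge0}\sum_{k\ge0}q_{n,k}x^ny^k$ equals \[H(x,y)=\frac{1+(x+x^2+x^3+x^4)y+x^5y^2}{1-x-yx^5}.\]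
   Context: Here $q_{n,k}$ (two indices) is a counting function distinct from the sequence term $q_n$. Given an increasing sequence $\{q_i\}$, a decomposition $m=q_{\ell_1}+\dots+q_{\ell_t}$ with $q_{\ell_1}>\dots>q_{\ell_t}$ is FQ-legal if $|\ell_i-\ell_j|\notin\{0,1,3,4\}$ for $i\neq j$ and $\{1,3\}\not\subset\{\ell_1,\dots,\ell_t\}$. The Fibonacci Quilt sequence has $q_1=1$ and each $q_i$ ($i\ge2$) is the smallest positive integer with no FQ-legal decomposition using $q_1,\dots,q_{i-1}$ (it begins $1,2,3,4,5,7,9,12,\dots$). The Greedy-6 decomposition of a positive integer $m$: if $m=q_n$ it is $q_n$; if $m=6$ it is $q_4+q_2$; otherwise write $m=q_{\ell_1}+x$ with $q_{\ell_1}<m<q_{\ell_1+1}$, $x>0$, and iterate on $x$. *)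

From mathcomp Require Import all_boot all_order all_algebra.
From mathcomp Require Import boolp.
Set Implicit Arguments. Unset Strict Implicit. Unset Printing Implicit Defensive.
Import Order.TTheory GRing.Theory Num.Theory.

(* A sequence is q : nat -> nat, indexed from 1 (q 0 is irrelevant/unused). *)

Definition FQgap (a b : nat) : bool :=
  let d := if a <= b then b - a else a - b in d \notin [:: 0; 1; 3; 4].

(* s = [:: l_1; ...; l_t] lists the indices of the summands, with
   q l_1 > ... > q l_t. *)
Definition FQlegal (q : nat -> nat) (s : seq nat) : bool :=
  [&& sorted (fun a b => q b < q a) s,
      pairwise FQgap s
    & ~~ ((1 \in s) && (3 \in s))].

Definition has_FQdecomp (q : nat -> nat) (N m : nat) : Prop :=
  exists s : seq nat,
    [/\ all (fun l => (1 <= l) && (l <= N)) s, FQlegal q s & sumn (map q s) = m].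

Definition is_FQ_sequence (q : nat -> nat) : Prop :=
  q 1 = 1 /\
  forall i, 2 <= i ->
    [/\ 0 < q i,
        ~ has_FQdecomp q i.-1 (q i)
      & forall m, 0 < m < q i -> has_FQdecomp q i.-1 m].

Inductive greedy6 (q : nat -> nat) : nat -> seq nat -> Prop :=
| greedy6_zero : greedy6 q 0 [::]
| greedy6_term n : 1 <= n -> greedy6 q (q n) [:: n]
| greedy6_six : (forall n, 1 <= n -> q n <> 6) -> greedy6 q 6 [:: 4; 2]
| greedy6_step m l s :
    0 < m -> (forall n, 1 <= n -> q n <> m) -> m <> 6 ->
    1 <= l -> q l < m < q l.+1 ->
    greedy6 q (m - q l) s -> greedy6 q m (l :: s).

Definition qnk (q : nat -> nat) (n k : nat) : nat :=
  #|[set m : 'I_(q n.+1) | `[< exists s, greedy6 q m s /\ size s = k >] ]|.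

(* a n k is the coefficient of x^n y^k *)
Definition fps2 := nat -> nat -> int.
Local Open Scope ring_scope.
Definition fps2_add (a b : fps2) : fps2 := fun n k => a n k + b n k.
Definition fps2_opp (a : fps2) : fps2 := fun n k => - a n k.
Definition fps2_mul (a b : fps2) : fps2 :=
  fun n k => \sum_(i < n.+1) \sum_(j < k.+1) a i j * b (n - i)%N (k - j)%N.
Definition fps2_one : fps2 := fun n k => ((n == 0%N) && (k == 0%N) : nat)%:R.
Definition fps2_X : fps2 := fun n k => ((n == 1%N) && (k == 0%N) : nat)%:R.
Definition fps2_Y : fps2 := fun n k => ((n == 0%N) && (k == 1%N) : nat)%:R.
Definition fps2_pow (a : fps2) (e : nat) : fps2 := iter e (fps2_mul a) fps2_one.

Definition FQ_H (q : nat -> nat) : fps2 := fun n k => (qnk q n k)%:Z.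

Definition FQ_denom : fps2 :=
  fps2_add fps2_one
    (fps2_opp (fps2_add fps2_X (fps2_mul fps2_Y (fps2_pow fps2_X 5)))).

Definition FQ_numer : fps2 :=
  fps2_add fps2_one
   (fps2_add
     (fps2_mul (fps2_add fps2_X (fps2_add (fps2_pow fps2_X 2)
                 (fps2_add (fps2_pow fps2_X 3) (fps2_pow fps2_X 4)))) fps2_Y)
     (fps2_mul (fps2_pow fps2_X 5) (fps2_pow fps2_Y 2))).

From mathcomp Require Import all_boot all_algebra.
From mathcomp Require Import boolp zify.

(* The defining property forces q_n = fq n for n >= 1, where fq is 1, 2, 3, 4, 5
   followed by fq (n+3) = fq (n+1) + fq n, equivalently fq (n+1) = fq n + fq (n-4)
   for n >= 6.  Indeed every m < fq (N+1) has an FQ-legal decomposition with indices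
   at most N (use N and decompose m - fq N < fq (N-4) with indices at most N-5),
   whereas fq (N+1) has none: a legal decomposition with largest index l sums to
   less than fq (l+3), which forces l to be N or N-1, and removing that summand
   leaves a legal decomposition of fq (N-4), resp. fq (N-2), contradicting the
   induction hypothesis.
   For n >= 6 and x < fq (n-4) the Greedy-6 decomposition of fq n + x is n followed
   by that of x, so q_{n,k+1} = q_{n-1,k+1} + q_{n-5,k}.  With the values for
   n <= 5 this recurrence yields the closed forms and, coefficient by coefficient,
   H(x,y) (1 - x - y x^5) = 1 + (x + x^2 + x^3 + x^4) y + x^5 y^2. *)

Set Implicit Arguments.
Unset Strict Implicit.
Unset Printing Implicit Defensive.

Fixpoint fq (n : nat) : nat :=
  match n with
  | (m.+1 as m1).+2 => if n <= 4 then n else fq m1 + fq m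
  | _ => n
  end.
Arguments fq : simpl nomatch.

Lemma fqSSS n : 2 <= n -> fq n.+3 = fq n.+1 + fq n.
Proof. by case: n => [|[|n]]. Qed.

Lemma leq_fq n : n <= fq n.
Proof.
elim/ltn_ind: n => -[|[|[|[|[|n]]]]] // IH.
rewrite (fqSSS (_ : 2 <= n.+2)) //.
have le3 : n.+3 <= fq n.+3 by apply: IH; lia.
have le2 : n.+2 <= fq n.+2 by apply: IH; lia.
lia.
Qed.

Lemma fq_rec n : 6 <= n -> fq n.+1 = fq n + fq (n - 4).
Proof.
case: n => [|[|[|[|[|[|n]]]]]] // _.
rewrite (fqSSS (_ : 2 <= n.+4)) // (fqSSS (_ : 2 <= n.+3)) //.
rewrite (fqSSS (_ : 2 <= n.+2)) // (_ : n.+2.+4 - 4 = n.+2) //; lia.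
Qed.

Lemma fq_padovan n : 4 <= n -> fq n.+1 = fq n.-1 + fq (n - 2).
Proof. by case: n => [|[|[|[|n]]]] // _; rewrite (fqSSS (_ : 2 <= n.+2)). Qed.

Lemma fq_incr n : fq n < fq n.+1.
Proof.
have [n_small | n_ge6] := ltnP n 6; first by case: n n_small => [|[|[|[|[|[|]]]]]].
rewrite fq_rec //; have := leq_fq (n - 4); lia.
Qed.

Lemma fq_leE : {mono fq : i j / i <= j}.
Proof. exact: leq_mono (homo_ltn ltn_trans fq_incr). Qed.

Lemma fq_ltE : {mono fq : i j / i < j}.
Proof. exact/leqW_mono/fq_leE. Qed.

Definition FQnext (l x : nat) : bool := (x.+2 == l) || (x + 5 <= l).

Lemma FQnext_lt l x : FQnext l x -> x < l.
Proof. by case/orP => [/eqP <-|]; lia. Qed.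

Lemma FQgapE a b : b < a -> FQgap a b = FQnext a b.
Proof. by move=> ba; rewrite /FQgap /FQnext leqNgt ba /= !inE; apply/idP/idP; lia. Qed.

Lemma FQlegal_eq_in q q' s : {in s, q =1 q'} -> FQlegal q s = FQlegal q' s.
Proof.
move=> qq'; have sortedE f : sorted (fun a b => f b < f a) s = sorted gtn (map f s).
  by rewrite sorted_map.
by rewrite /FQlegal !sortedE; congr (sorted _ _ && _); apply/eq_in_map.
Qed.

Lemma FQlegal_fqE s :
  FQlegal fq s = [&& sorted gtn s, pairwise FQgap s & ~~ ((1 \in s) && (3 \in s))].
Proof.
rewrite /FQlegal; have -> // : (fun a b => fq b < fq a) = gtn.
by apply/funext => a; apply/funext => b; rewrite /= fq_ltE.
Qed.

Lemma FQlegal_fq_cons l s : FQlegal fq (l :: s) -> all (FQnext l) s && FQlegal fq s.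
Proof.
rewrite FQlegal_fqE /= (path_sortedE (rev_trans ltn_trans)).
case/and3P => /andP[l_gt s_sorted] /andP[l_gap s_pw] not13; apply/andP; split.
  by apply/allP => x xs; rewrite -FQgapE ?(allP l_gap) ?(allP l_gt).
rewrite FQlegal_fqE; apply/and3P; split => //.
by apply: contra not13; rewrite !inE => /andP[-> ->]; rewrite !orbT.
Qed.

Lemma FQlegal_fq_consI l s :
  3 < l -> all (FQnext l) s -> FQlegal fq s -> FQlegal fq (l :: s).
Proof.
move=> l_gt3 /allP l_next; rewrite !FQlegal_fqE /= (path_sortedE (rev_trans ltn_trans)).
rewrite !inE => /and3P[-> -> not13]; rewrite !andbT; apply/and3P; split.
- by apply/allP => x /l_next /FQnext_lt.
- by apply/allP => x xs; rewrite (FQgapE (FQnext_lt (l_next x xs))) l_next.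
- by case: l l_gt3 {l_next} => [|[|[|[|l]]]].
Qed.

Lemma FQlegal_fq_sum_lt l s : FQlegal fq (l :: s) -> fq l + sumn (map fq s) < fq l.+3.
Proof.
elim/ltn_ind: l s => l IH [_|l' t]; first by rewrite /= addn0 fq_ltE; lia.
case/FQlegal_fq_cons/andP => /= /andP[/orP[/eqP l_eq | l'_le] l_next] legal_t; last first.
  have := IH l' _ t legal_t; have : fq l'.+3 <= fq l.+1 by rewrite fq_leE; lia.
  by rewrite (fqSSS (_ : 2 <= l)); lia.
subst l; have fq_l' : fq l' < fq l'.+2 by rewrite fq_ltE.
have := fq_incr l'.+2; rewrite (fqSSS (_ : 2 <= l'.+2)) //.
case: t l_next legal_t => [_ _|l'' t /andP[l''_next2 _]]; first by rewrite /= addn0; lia.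
case/FQlegal_fq_cons/andP => /andP[l''_next _] /IH sum_lt.
have {l''_next l''_next2} l''_le : l'' + 5 <= l'.
  by move: l''_next l''_next2; rewrite /FQnext; lia.
have {sum_lt} : fq l'' + sumn (map fq t) < fq l''.+3 by apply: sum_lt; lia.
have : fq l''.+3 <= fq (l'.+2 - 4) by rewrite fq_leE; lia.
by rewrite (fq_rec (_ : 6 <= l'.+2)) /=; lia.
Qed.

Fixpoint subseqs (T : Type) (s : seq T) : seq (seq T) :=
  if s is x :: s' then [seq x :: t | t <- subseqs s'] ++ subseqs s' else [:: [::]].

Lemma filter_in_subseqs (T : eqType) (a : pred T) (s : seq T) : filter a s \in subseqs s.
Proof.
by elim: s => //= x s IH; rewrite mem_cat; case: (a x); rewrite ?map_f ?IH ?orbT.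
Qed.

Lemma gtn_sorted_filter_iota N s :
  sorted gtn s -> all (fun l => (1 <= l) && (l <= N)) s ->
  s = [seq l <- rev (iota 1 N) | l \in s].
Proof.
move=> s_sorted /allP s_range; apply: (irr_sorted_eq (rev_trans ltn_trans) ltnn) => //.
  by rewrite sorted_filter ?rev_sorted ?iota_ltn_sorted //; apply: rev_trans ltn_trans.
move=> l; rewrite mem_filter mem_rev mem_iota.
by case l_s: (l \in s) => //=; have := s_range l l_s; lia.
Qed.

Lemma not_has_FQdecomp_fq_succ_small N : N <= 5 -> ~ has_FQdecomp fq N (fq N.+1).
Proof.
move=> N_le5 [s [s_range s_legal s_sum]].
(* A legal decomposition is decreasing, hence a subsequence of [N; ...; 1]. *)
have s_sub : s \in subseqs (rev (iota 1 N)).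
  move: s_legal; rewrite FQlegal_fqE => /and3P[s_sorted _ _].
  by rewrite [s in s \in _](gtn_sorted_filter_iota s_sorted s_range) filter_in_subseqs.
have : all (fun t => ~~ FQlegal fq t || (sumn (map fq t) != fq N.+1))
           (subseqs (rev (iota 1 N))).
  by case: N N_le5 {s_range s_sum s_sub} => [|[|[|[|[|[|]]]]]] //; vm_compute.
by move/allP/(_ s s_sub); rewrite s_legal s_sum eqxx.
Qed.

Lemma not_has_FQdecomp_fq_succ N : ~ has_FQdecomp fq N (fq N.+1).
Proof.
elim/ltn_ind: N => N IH; have [|N_gt5] := leqP N 5.
  exact: not_has_FQdecomp_fq_succ_small.
case=> -[|l t]; first by case=> _ _ /= sum0; have := leq_fq N.+1; lia.
case=> /= /andP[/andP[l_gt0 l_le] t_range] legal_lt sum_eq.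
have [l_small|l_big] := ltnP l N.-1.
  have := FQlegal_fq_sum_lt legal_lt; have : fq l.+3 <= fq N.+1 by rewrite fq_leE; lia.
  by rewrite sum_eq; lia.
have /andP[/allP l_next legal_t] := FQlegal_fq_cons legal_lt.
have [l_eq|l_eq] : l = N.-1 \/ l = N by lia.
- subst l; apply: (IH (N - 3)); first by lia.
  exists t; split => //.
    apply/allP => x xt; have := allP t_range x xt; have := l_next x xt.
    by rewrite /FQnext; lia.
  rewrite (_ : (N - 3).+1 = N - 2); last by lia.
  by move: sum_eq; rewrite fq_padovan; lia.
- subst l; move: sum_eq; rewrite fq_rec // => /eqP; rewrite eqn_add2l => /eqP.
  case: t {legal_lt} t_range l_next legal_t => [_ _ _ /=|l' t].
    by have := leq_fq (N - 4); lia.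
  move=> t_range l_next legal_t sum_t.
  have [l'_eq|l'_le] : l' = N - 2 \/ l' + 5 <= N.
    by move: (l_next l' (mem_head _ _)); rewrite /FQnext; lia.
    have : fq (N - 4) < fq (N - 2) by rewrite fq_ltE; lia.
    by rewrite -l'_eq -sum_t /=; lia.
  apply: (IH (N - 5)); first by lia.
  rewrite (_ : (N - 5).+1 = N - 4); last by lia.
  exists (l' :: t); split => //.
  have /andP[/allP l'_next _] := FQlegal_fq_cons legal_t.
  apply/allP => x xt; have := allP t_range x xt.
  have : x <= l' by move: xt; rewrite inE => /orP[/eqP->|/l'_next/FQnext_lt/ltnW].
  lia.
Qed.

Lemma has_FQdecomp_widen q N M m : N <= M -> has_FQdecomp q N m -> has_FQdecomp q M m.
Proof.
move=> NM [s [s_range s_legal s_sum]]; exists s; split => //.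
by apply: sub_all s_range => l /andP[-> /leq_trans->].
Qed.

Lemma has_FQdecomp_eq q q' N m :
  (forall j, 0 < j <= N -> q j = q' j) -> has_FQdecomp q N m -> has_FQdecomp q' N m.
Proof.
move=> qq' [s [s_range s_legal s_sum]].
have qq's : {in s, q =1 q'} by move=> j /(allP s_range)/qq'.
exists s; split => //; first by rewrite -(FQlegal_eq_in qq's).
by rewrite -s_sum; congr sumn; apply/esym/eq_in_map.
Qed.

Lemma has_FQdecomp_fq N m : m < fq N.+1 -> has_FQdecomp fq N m.
Proof.
elim/ltn_ind: N m => N IH m m_lt.
have [N_le5|N_gt5] := leqP N 5.
  have [->|m_gt0] := posnP m; first by exists [::].
  have [m_le5|m_gt5] := leqP m 5.
    exists [:: m]; rewrite /= andbT m_gt0 addn0; split.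
    - by case: N N_le5 {IH} m_lt => [|[|[|[|[|[|]]]]]] //=; lia.
    - by rewrite FQlegal_fqE /= !inE; apply/negP => /andP[/eqP <-].
    - by case: m m_gt0 m_le5 {m_lt} => [|[|[|[|[|[|]]]]]].
  have [-> ->] : N = 5 /\ m = 6.
    by case: N N_le5 {IH} m_lt => [|[|[|[|[|[|]]]]]] //=; lia.
  by exists [:: 4; 2].
have [m_lt_N|m_ge_N] := ltnP m (fq N).
  apply: (has_FQdecomp_widen (leq_pred N)); apply: IH; first by lia.
  by rewrite prednK //; lia.
have [s [s_range s_legal s_sum]] : has_FQdecomp fq (N - 5) (m - fq N).
  apply: IH; first by lia.
  by rewrite (_ : (N - 5).+1 = N - 4); [move: m_lt; rewrite fq_rec //; lia | lia].
have s_le : all (fun l => l + 5 <= N) s by apply: sub_all s_range => l; lia.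
exists (N :: s); split.
- rewrite /= leqnn andbT; apply/andP; split; first by lia.
  by apply: sub_all s_range => l; lia.
- apply: FQlegal_fq_consI s_legal; first by lia.
  by apply: sub_all s_le => l l_le; rewrite /FQnext l_le orbT.
- by rewrite /= s_sum; lia.
Qed.

Lemma FQ_sequence_fq q : is_FQ_sequence q -> forall n, 0 < n -> q n = fq n.
Proof.
case=> q1 q_min; elim/ltn_ind=> -[//|N] IH _; case: N => [//|N] in IH *.
have [_ q_not q_all] := q_min N.+2 isT.
have qfq j : 0 < j <= N.+1 -> q j = fq j by case/andP=> j_gt0 j_le; apply: IH.
have fqq j : 0 < j <= N.+1 -> fq j = q j by move=> /qfq.
case: (ltngtP (q N.+2) (fq N.+2)) => // [q_lt | fq_lt]; exfalso.
- by apply: q_not; apply: has_FQdecomp_eq fqq _; apply: has_FQdecomp_fq.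
- apply: (@not_has_FQdecomp_fq_succ N.+1); apply: has_FQdecomp_eq qfq _.
  by apply: q_all; rewrite fq_lt andbT (leq_trans _ (leq_fq _)).
Qed.

Lemma card_ord_set N (b : pred nat) : #|[set m : 'I_N | b m]| = count b (iota 0 N).
Proof.
rewrite -val_enum_ord count_map cardsE cardE /enum_mem size_filter count_filter.
by apply: eq_count => i; rewrite !inE andbT.
Qed.

Definition greedy6_size (q : nat -> nat) (k m : nat) : bool :=
  `[< exists s, greedy6 q m s /\ size s = k >].

Lemma qnkE q n k : qnk q n k = count (greedy6_size q k) (iota 0 (q n.+1)).
Proof. exact: card_ord_set. Qed.

Lemma greedy6_eq q q' m s :
  (forall n, 0 < n -> q n = q' n) -> greedy6 q m s -> greedy6 q' m s.
Proof.
move=> qq'; elim=> [|n n_gt0|not6|{}m l {}s m_gt0 not_term m_ne6 l_gt0 l_br _ IH].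
- exact: greedy6_zero.
- by rewrite qq' //; apply: greedy6_term.
- by apply: greedy6_six => n n_gt0; rewrite -qq' //; apply: not6.
- apply: greedy6_step; rewrite -?qq' //.
  by move=> n n_gt0; rewrite -qq' //; apply: not_term.
Qed.

Lemma qnk_eq q q' n k : (forall n, 0 < n -> q n = q' n) -> qnk q n k = qnk q' n k.
Proof.
move=> qq'; rewrite !qnkE qq' //; apply: eq_count => m.
have q'q n' : 0 < n' -> q' n' = q n' by move=> /qq'.
by apply/asboolP/asboolP => -[s [Hs <-]]; exists s; split => //; apply: greedy6_eq Hs.
Qed.

Lemma greedy6_nil q m : greedy6 q m [::] -> m = 0.
Proof. by move=> H; inversion H. Qed.

Section Greedy6.
Variable q : nat -> nat.
Hypothesis q1 : q 1 = 1.
Hypothesis q_incr : forall n, 0 < n -> q n < q n.+1.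

Lemma q_leE : {in [pred n | 0 < n] &, {mono q : i j / i <= j}}.
Proof.
apply: leq_mono_in; apply: homo_ltn_in => [y x z|i j i_gt0 _ k /andP[ik _]|i].
- exact: ltn_trans.
- exact: leq_trans i_gt0 (ltnW ik).
- by rewrite inE => /q_incr.
Qed.

Lemma q_ltE : {in [pred n | 0 < n] &, {mono q : i j / i < j}}.
Proof. exact: leqW_mono_in q_leE. Qed.

Lemma q_gt0 n : 0 < n -> 0 < q n.
Proof. by move=> n_gt0; rewrite -q1 q_leE. Qed.

Lemma q_bracket m : 0 < m -> exists2 l, 0 < l & q l <= m < q l.+1.
Proof.
elim: m => // m IH _; have [->|/IH[l l_gt0 /andP[lo hi]]] := posnP m.
  by exists 1; have := q_incr (ltn0Sn 0); rewrite // q1 => ->.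
have [m1_lt|m1_ge] := ltnP m.+1 (q l.+1); first by exists l; rewrite // leqW.
by exists l.+1; rewrite // m1_ge (leq_ltn_trans hi) ?q_incr.
Qed.

Lemma q_bracket_uniq m l l' :
  0 < l -> 0 < l' -> q l <= m < q l.+1 -> q l' <= m < q l'.+1 -> l = l'.
Proof.
move=> l_gt0 l'_gt0 /andP[lo hi] /andP[lo' hi']; apply/eqP; rewrite eqn_leq.
rewrite -ltnS -(q_ltE l_gt0) // -[l' <= l]ltnS -(q_ltE l'_gt0) //.
by rewrite (leq_ltn_trans lo hi') (leq_ltn_trans lo' hi).
Qed.

Lemma greedy6_det m s1 s2 : greedy6 q m s1 -> greedy6 q m s2 -> s1 = s2.
Proof.
move=> H1 H2; move: {1 3}m s2 H2 (erefl m).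
elim: H1 => [|n n_gt0|not6|m' l s m_gt0 not_term m_ne6 l_gt0 l_br _ IH] m2 s2.
- case=> [|n n_gt0|_|m'' ? ? m''_gt0 ? ? ? ? ?] E //.
  + by have := q_gt0 n_gt0; rewrite -E ltnn.
  + by move: m''_gt0; rewrite -E ltnn.
- case=> [|n' n'_gt0|not6|m'' l' s' _ not_term ? ? ? ?] E.
  + by have := q_gt0 n_gt0; rewrite E ltnn.
  + by rewrite (incn_inj_in q_leE n_gt0 n'_gt0 E).
  + by case: (not6 n n_gt0 E).
  + by case: (not_term n n_gt0 E).
- case=> [|n' n'_gt0|_|m'' l' s' _ _ m''_ne6 ? ? ?] E //.
  + by case: (not6 n' n'_gt0 (esym E)).
  + by case: (m''_ne6 (esym E)).
- case=> [|n' n'_gt0|_|m'' l' s' _ _ _ l'_gt0 l'_br H2] E.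
  + by move: m_gt0; rewrite E ltnn.
  + by case: (not_term n' n'_gt0 (esym E)).
  + by case: (m_ne6 E).
  + subst m''; case/andP: l_br l'_br => lo hi /andP[lo' hi'].
    have l_eq : l = l'.
      by apply: (@q_bracket_uniq m'); rewrite ?(ltnW lo) ?(ltnW lo') ?hi ?hi'.
    by subst l'; rewrite (IH _ _ H2).
Qed.

Lemma greedy6_exists m : exists s, greedy6 q m s.
Proof.
elim/ltn_ind: m => m IH.
have [->|m_gt0] := posnP m; first by exists [::]; apply: greedy6_zero.
have [[n n_gt0 <-]|not_term] := pselect (exists2 n, 0 < n & q n = m).
  by exists [:: n]; apply: greedy6_term.
have {}not_term n : 0 < n -> q n <> m by move=> n_gt0 qn; apply: not_term; exists n.
have [m6|m_ne6] := eqVneq m 6; first by subst m; exists [:: 4; 2]; apply: greedy6_six.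
have [l l_gt0 /andP[lo hi]] := q_bracket m_gt0.
have ql_lt : q l < m by rewrite ltn_neqAle lo andbT; apply/eqP/not_term.
have [s Hs] : exists s, greedy6 q (m - q l) s by apply: IH; rewrite ltn_subrL q_gt0 ?m_gt0.
exists (l :: s); apply: greedy6_step Hs => //; [exact/eqP | by rewrite ql_lt].
Qed.

Lemma greedy6_sizeE k m s : greedy6 q m s -> greedy6_size q k m = (size s == k).
Proof.
move=> Hs; apply/asboolP/eqP => [[s' [Hs' <-]]|<-]; last by exists s.
by rewrite (greedy6_det Hs Hs').
Qed.

End Greedy6.

Section GreedyFQ.

Let fq_greedy6_det := @greedy6_det fq erefl (fun n _ => fq_incr n).
Let fq_greedy6_exists := @greedy6_exists fq erefl (fun n _ => fq_incr n).
Let fq_greedy6_sizeE := @greedy6_sizeE fq erefl (fun n _ => fq_incr n).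

Lemma fq_neq6 n : fq n <> 6.
Proof.
have [n_le5|n_gt5] := leqP n 5.
  have : fq n <= 5 by rewrite -[5]/(fq 5) fq_leE.
  lia.
have : 7 <= fq n by rewrite -[7]/(fq 6) fq_leE.
lia.
Qed.

Lemma greedy6_fq_shift n x s :
  6 <= n -> x < fq (n - 4) -> greedy6 fq x s -> greedy6 fq (fq n + x) (n :: s).
Proof.
move=> n_ge6 x_lt Hx; have fq_nS := fq_rec n_ge6.
have [x0|x_gt0] := posnP x.
  subst x; rewrite addn0 (fq_greedy6_det Hx (greedy6_zero fq)).
  by apply: greedy6_term; apply: leq_trans n_ge6.
apply: greedy6_step; rewrite ?addKn //.
- by rewrite addn_gt0 x_gt0 orbT.
- move=> n' _ fq_n'; have : fq n < fq n' < fq n.+1 by rewrite fq_n'; lia.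
  by rewrite !fq_ltE; lia.
- have : 7 <= fq n by rewrite -[7]/(fq 6) fq_leE.
  lia.
- by apply: leq_trans n_ge6.
- lia.
Qed.

Lemma qnk_fq0 n : qnk fq n 0 = 1.
Proof.
rewrite qnkE (eq_count (a2 := pred1 0)) => [|m]; last first.
  have [s Hs] := fq_greedy6_exists m.
  rewrite (fq_greedy6_sizeE _ Hs) size_eq0; apply/eqP/eqP => [s0|m0].
    by move: Hs; rewrite s0 => /greedy6_nil.
  by subst m; apply: fq_greedy6_det Hs (greedy6_zero fq).
by rewrite count_uniq_mem ?iota_uniq // mem_iota (leq_trans _ (leq_fq _)).
Qed.

Lemma greedy6_fq_size_small k m :
  m <= 6 -> greedy6_size fq k m = (k == (m != 0) + (m == 6)).
Proof.
case: m => [_|m m_le6]; first by rewrite (fq_greedy6_sizeE _ (greedy6_zero fq)) eq_sym.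
have [m5|m_ne5] := eqVneq m 5.
  subst m; have H6 : greedy6 fq 6 [:: 4; 2] by apply: greedy6_six => n _; apply: fq_neq6.
  by rewrite (fq_greedy6_sizeE _ H6) eq_sym.
have fq_m : fq m.+1 = m.+1 by case: m m_le6 m_ne5 => [|[|[|[|[|[|]]]]]].
have := greedy6_term fq (ltn0Sn m); rewrite fq_m => /(fq_greedy6_sizeE k) ->.
by rewrite eq_sym /= eqSS (negbTE m_ne5).
Qed.

Lemma qnk_fq_small n k :
  n <= 5 -> qnk fq n k = (k == 0) + (k == 1) * n + (k == 2) * (n == 5).
Proof.
move=> n_le5; rewrite qnkE (@eq_in_count _ _ (fun m => k == (m != 0) + (m == 6))).
  by case: n n_le5 => [|[|[|[|[|[|]]]]]] //= _; case: k => [|[|[|k]]].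
move=> m; rewrite mem_iota => /andP[_ m_lt]; apply: greedy6_fq_size_small.
by rewrite -ltnS (leq_trans m_lt) // -[7]/(fq 6) fq_leE.
Qed.

Lemma qnk_fq_rec n k : 6 <= n -> qnk fq n k.+1 = qnk fq n.-1 k.+1 + qnk fq (n - 5) k.
Proof.
move=> n_ge6; rewrite !qnkE prednK ?(leq_trans _ n_ge6) // fq_rec // iotaD count_cat add0n.
congr (_ + _); rewrite (_ : (n - 5).+1 = n - 4); last by lia.
rewrite -[fq n]addn0 iotaDl count_map; apply: eq_in_count => x.
rewrite mem_iota add0n => /andP[_ x_lt]; have [s Hs] := fq_greedy6_exists x.
rewrite /= (fq_greedy6_sizeE _ Hs).
by rewrite (fq_greedy6_sizeE _ (greedy6_fq_shift n_ge6 x_lt Hs)).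
Qed.

End GreedyFQ.

Section Fps2.
Import GRing.Theory.
Local Open Scope ring_scope.

Definition fps2_mono (c d : nat) : fps2 := fun n k => ((n == c) && (k == d) : nat)%:R.

Lemma fps2_mulC (a b : fps2) : fps2_mul a b = fps2_mul b a.
Proof.
apply/funext => n; apply/funext => k; rewrite /fps2_mul.
rewrite [LHS](reindex_inj rev_ord_inj); apply: eq_bigr => i _.
rewrite (reindex_inj rev_ord_inj); apply: eq_bigr => j _ /=.
by rewrite !subSS !subKn 1?mulrC // -ltnS.
Qed.

Lemma fps2_mulDr (a b c : fps2) :
  fps2_mul a (fps2_add b c) = fps2_add (fps2_mul a b) (fps2_mul a c).
Proof.
apply/funext => n; apply/funext => k; rewrite /fps2_mul /fps2_add -big_split.
by apply: eq_bigr => i _; rewrite -big_split; apply: eq_bigr => j _; rewrite mulrDr.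
Qed.

Lemma fps2_mulNr (a b : fps2) : fps2_mul a (fps2_opp b) = fps2_opp (fps2_mul a b).
Proof.
apply/funext => n; apply/funext => k; rewrite /fps2_mul /fps2_opp -sumrN.
by apply: eq_bigr => i _; rewrite -sumrN; apply: eq_bigr => j _; rewrite mulrN.
Qed.

Lemma sum_ord_delta (F : nat -> int) n c :
  \sum_(i < n.+1) ((i == c :> nat) : nat)%:R * F i = if (c <= n)%N then F c else 0.
Proof.
rewrite (eq_bigr (fun i : 'I_n.+1 => if i == c :> nat then F i else 0)) => [|i _].
  by rewrite -big_mkcond big_ord1_eq ltnS.
by case: eqP; rewrite ?mul1r ?mul0r.
Qed.

Lemma fps2_mono_mul (a : fps2) c d n k :
  fps2_mul (fps2_mono c d) a n k =
  if (c <= n)%N && (d <= k)%N then a (n - c)%N (k - d)%N else 0.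
Proof.
pose G i := if (d <= k)%N then a (n - i)%N (k - d)%N else 0.
rewrite /fps2_mul (eq_bigr (fun i : 'I_n.+1 => ((i == c :> nat) : nat)%:R * G i)) => [|i _].
  by rewrite sum_ord_delta /G; case: (c <= n)%N.
rewrite /G -(sum_ord_delta (fun j => a (n - i)%N (k - j)%N)) mulr_sumr.
by apply: eq_bigr => j _; rewrite mulrA -natrM mulnb.
Qed.

Lemma fps2_mul_mono (a : fps2) c d n k :
  fps2_mul a (fps2_mono c d) n k =
  if (c <= n)%N && (d <= k)%N then a (n - c)%N (k - d)%N else 0.
Proof. by rewrite fps2_mulC fps2_mono_mul. Qed.

Lemma fps2_mono_mul_mono c d c' d' :
  fps2_mul (fps2_mono c d) (fps2_mono c' d') = fps2_mono (c + c') (d + d').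
Proof.
apply/funext => n; apply/funext => k; rewrite fps2_mono_mul /fps2_mono.
case: ifP => [/andP[cn dk]|/negbT]; first by congr (nat_of_bool _)%:R; apply/idP/idP; lia.
by rewrite negb_and -!ltnNge => lt; rewrite (_ : _ && _ = false) //; apply/negbTE; lia.
Qed.

Lemma fps2_pow_mono c d e : fps2_pow (fps2_mono c d) e = fps2_mono (e * c) (e * d).
Proof.
by elim: e => // e IH; rewrite /fps2_pow /= -/(fps2_pow _ e) IH fps2_mono_mul_mono.
Qed.

End Fps2.

Section CountRecurrence.
Variable Q : nat -> nat -> nat.
Hypothesis Q_0 : forall n, Q n 0 = 1.
Hypothesis Q_small :
  forall n k, n <= 5 -> Q n k = (k == 0) + (k == 1) * n + (k == 2) * (n == 5).
Hypothesis Q_rec : forall n k, 6 <= n -> Q n k.+1 = Q n.-1 k.+1 + Q (n - 5) k.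

Lemma Q_1 n : Q n 1 = n.
Proof.
elim/ltn_ind: n => n IH; have [n_le5|n_gt5] := leqP n 5.
  by rewrite Q_small //= mul1n mul0n addn0.
by rewrite Q_rec // IH ?Q_0; lia.
Qed.

Lemma Q_2 n : 5 <= n -> Q n 2 = 1 + (n - 5) * (n - 4) %/ 2.
Proof.
move=> n_ge5; have [d ->] : exists d, n = d + 5 by exists (n - 5); lia.
rewrite (_ : d + 5 - 5 = d) 1?(_ : d + 5 - 4 = d.+1); [|lia|lia].
elim: d => [|d IH]; first by rewrite Q_small.
rewrite Q_rec; last by lia.
rewrite (_ : (d.+1 + 5).-1 = d + 5) 1?(_ : d.+1 + 5 - 5 = d.+1); [|lia|lia].
rewrite IH Q_1 (_ : d.+1 * d.+2 = d.+1 * 2 + d * d.+1); last by lia.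
by rewrite divnMDl //; lia.
Qed.

Lemma Q_2_small n : n <= 4 -> Q n 2 = 0.
Proof.
by move=> n_le4; rewrite Q_small ?(leq_trans n_le4) //; case: n n_le4 => [|[|[|[|[|]]]]].
Qed.

Lemma Q_vanish n k : 3 <= k -> n < 5 * (k - 1) -> Q n k = 0.
Proof.
elim/ltn_ind: n k => n IH [//|k] k_ge3 n_lt; have [n_le5|n_gt5] := leqP n 5.
  by rewrite Q_small //; case: k k_ge3 {n_lt} => [|[|[|k]]].
rewrite Q_rec // (IH n.-1) //; try lia.
have [k_le2|k_gt2] := leqP k 2; last by rewrite IH //; lia.
by rewrite (_ : k = 2) ?Q_2_small //; lia.
Qed.

Import GRing.Theory.
Local Open Scope ring_scope.

Lemma Q_series_mul_denom : fps2_mul (fun n k => (Q n k)%:Z) FQ_denom = FQ_numer.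
Proof.
have -> : FQ_denom =
    fps2_add (fps2_mono 0 0) (fps2_opp (fps2_add (fps2_mono 1 0) (fps2_mono 5 1))).
  by rewrite /FQ_denom fps2_pow_mono fps2_mono_mul_mono.
have -> : FQ_numer = fps2_add (fps2_mono 0 0) (fps2_add (fps2_add (fps2_mono 1 1)
    (fps2_add (fps2_mono 2 1) (fps2_add (fps2_mono 3 1) (fps2_mono 4 1)))) (fps2_mono 5 2)).
  by rewrite /FQ_numer !fps2_pow_mono fps2_mulC !fps2_mulDr !fps2_mono_mul_mono.
rewrite fps2_mulDr fps2_mulNr fps2_mulDr.
apply/funext => n; apply/funext => k.
have coeffE c d : fps2_mul (fun n k => (Q n k)%:Z) (fps2_mono c d) n k =
    (if (c <= n) && (d <= k) then Q (n - c) (k - d) else 0)%N%:Z.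
  by rewrite fps2_mul_mono; case: ifP.
rewrite /fps2_add /fps2_opp !coeffE /fps2_mono !natz -!PoszD.
apply/eqP; rewrite subr_eq -PoszD eqz_nat; apply/eqP; rewrite /= !subn0.
case: n {coeffE} => [|[|[|[|[|[|n]]]]]]; last first.
  by case: k => [|k] /=; rewrite !subSS !subn0 ?Q_0 // Q_rec.
all: by case: k => [|[|[|k]]]; rewrite /= ?subSS ?subn0 ?Q_small ?muln0.
Qed.

End CountRecurrence.

Theorem propositionB1 (q : nat -> nat) (hq : is_FQ_sequence q) :
  ((forall n, qnk q n 0 = 1) /\ qnk q 5 2 = 1) /\
  (forall n, qnk q n 1 = n) /\
  (forall n, 6 <= n -> qnk q n 2 = 1 + (n - 5) * (n - 4) %/ 2) /\
  (forall n k, 3 <= k -> 5 * (k - 1) <= n ->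
     qnk q n k = qnk q (n - 5) (k - 1) + qnk q (n - 1) k) /\
  ((forall n k, 3 <= k -> n < 5 * (k - 1) -> qnk q n k = 0) /\
   (forall n, n <= 4 -> qnk q n 2 = 0)) /\
  fps2_mul (FQ_H q) FQ_denom = FQ_numer.
Proof.
have qnk_fqE n k : qnk q n k = qnk fq n k by apply: qnk_eq; apply: FQ_sequence_fq.
have Q_0 n : qnk q n 0 = 1 by rewrite qnk_fqE qnk_fq0.
have Q_small n k : n <= 5 -> qnk q n k = (k == 0) + (k == 1) * n + (k == 2) * (n == 5).
  by rewrite qnk_fqE; apply: qnk_fq_small.
have Q_rec n k : 6 <= n -> qnk q n k.+1 = qnk q n.-1 k.+1 + qnk q (n - 5) k.
  by rewrite !qnk_fqE; apply: qnk_fq_rec.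
split; first by split; [|rewrite Q_small].
split; first by apply: Q_1.
split; first by move=> n n_ge6; apply: Q_2 => //; apply: ltnW.
split.
  move=> n [//|k] k_ge3 n_ge; rewrite !subn1 /= addnC Q_rec //.
  lia.
split; first by split; [apply: Q_vanish | apply: Q_2_small].
by apply: Q_series_mul_denom.
Qed.
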